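(* Let $2\le M_R\le M_T$, $\sigma^2>0$, let $\tilde{\mathbf\Phi}\in\mathbb R^{M_R\times M_T}$ have i.i.d. $\mathcal N(0,\sigma^2)$ entries, and let $\mathbf\Sigma\in\mathbb R^{M_R\times M_T}$ have $[\mathbf\Sigma]_{1,1}=\sqrt{M_TM_R}$ and all other entries zero. Write $\mathbf S=-j\mathbf\Sigma+\tilde{\mathbf\Phi}=[\mathbf s_1\ \cdots\ \mathbf s_{M_R}]^T$. Define $\mathbf s_1^\perp=\mathbf s_1$ and, for $i=2,\dots,M_R$, $\mathbf A_i=\mathbf I_{M_T}-\sum_{n=1}^{i-1}\frac{\mathbf s_n^\perp\mathbf s_n^{\perp H}}{\|\mathbf s_n^\perp\|^2}$ and $\mathbf s_i^\perp=\mathbf A_i\mathbf s_i$ (Gram–Schmidt). Then, with probability 1, for each $i=2,\dots,M_R$ the real symmetric matrix $\mathrm{Re}(\mathbf A_i)$ has eigenvalues $$\{\underbrace{1,\dots,1}_{M_T-i},\ \underbrace{0,\dots,0}_{i-2},\ \eta^{(i)},\ 1-\eta^{(i)}\}$$ for some $\eta^{(i)}=\eta^{(i)}(\mathbf s_1^\perp,\dots,\mathbf s_{i-1}^\perp)\in[0,1]$.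
   Context: $\mathbf s_i^T$ denotes the $i$th row of $\mathbf S$; $\mathrm{Re}$ is the entrywise real part. *)

(* Complex numbers: an arbitrary numClosedFieldType C
   (e.g. the complex numbers); real numbers = its real elements. *)
From HB Require Import structures.
From mathcomp Require Import all_boot all_order all_algebra.
Set Implicit Arguments. Unset Strict Implicit. Unset Printing Implicit Defensive.
Import Order.TTheory GRing.Theory Num.Theory.
Local Open Scope ring_scope.

Section Defs.
Variable C : numClosedFieldType.

Definition adjmx m n (A : 'M[C]_(m, n)) : 'M[C]_(n, m) := \matrix_(i, j) (A j i)^*.

Definition Remx m n (A : 'M[C]_(m, n)) : 'M[C]_(m, n) := \matrix_(i, j) 'Re (A i j).

Definition sqnorm n (v : 'cV[C]_n) : C := (adjmx v *m v) 0 0.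

Definition Sigma_mx (MR MT : nat) : 'M[C]_(MR, MT) :=
  \matrix_(i, j) (if (nat_of_ord i == 0%N) && (nat_of_ord j == 0%N)
                  then sqrtC ((MT * MR)%:R) else 0).

Definition S_mx (MR MT : nat) (Phi : 'M[C]_(MR, MT)) : 'M[C]_(MR, MT) :=
  - ('i *: Sigma_mx MR MT) + Phi.

(* the k-th row of S (0-based) as a column vector; s_(k+1) in the paper *)
Definition srow (MR MT : nat) (S : 'M[C]_(MR, MT)) (k : nat) : 'cV[C]_MT :=
  match ltnP k MR with
  | LtnNotGeq Hk => (row (Ordinal Hk) S)^T
  | _ => 0
  end.

Definition projA n (p : seq 'cV[C]_n) : 'M[C]_n :=
  1%:M - \sum_(v <- p) ((sqnorm v)^-1 *: (v *m adjmx v)).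

Fixpoint gs n (s : nat -> 'cV[C]_n) (k : nat) : seq 'cV[C]_n :=
  match k with
  | 0 => [::]
  | k'.+1 => let p := gs s k' in rcons p (projA p *m s k')
  end.

(* A_i of the paper (1-based i >= 2) *)
Definition A_mx (MR MT : nat) (S : 'M[C]_(MR, MT)) (i : nat) : 'M[C]_MT :=
  projA (gs (srow S) i.-1).

End Defs.

(* A_i = I - P, where P = sum_(n < i) s_n^perp s_n^perp^H / ||s_n^perp||^2 is the orthogonal
   projection onto span(s_1, ..., s_(i-1)); so A_i is a Hermitian idempotent and its real part
   R = Re(A_i) is real symmetric with 0 <= R <= I, i.e. its eigenvalues lie in [0, 1].  They sum
   to tr R = M_T - (i - 1).  The rows s_2, ..., s_(i-1) are real and independent and A_i kills
   them, hence so does R: at least i - 2 eigenvalues vanish.  R fixes every vector orthogonal to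
   the i real vectors Re s_1, ..., Re s_(i-1), Im s_1, so at most i eigenvalues differ from 1.
   Counting, at most two eigenvalues lie strictly between 0 and 1, the trace being an integer
   they sum to 1, and the remaining ones are M_T - i ones and i - 2 zeros. *)

From HB Require Import structures.
From mathcomp Require Import all_boot all_order all_algebra zify ring.
Set Implicit Arguments. Unset Strict Implicit. Unset Printing Implicit Defensive.
Import Order.TTheory GRing.Theory Num.Theory Num.Def.
Local Open Scope ring_scope.

Section InnerProduct.
Variables (C : numClosedFieldType) (n : nat).
Implicit Types x y z : 'cV[C]_n.

Definition cdot x y : C := (adjmx x *m y) 0 0.

Lemma cdotE x y : cdot x y = \sum_c (x c 0)^* * y c 0.
Proof. by rewrite /cdot mxE; apply: eq_bigr => c _; rewrite mxE. Qed.

Lemma sqnorm_cdot x : sqnorm x = cdot x x. Proof. by []. Qed.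

Lemma cdotC x y : cdot x y = (cdot y x)^*.
Proof.
rewrite !cdotE rmorph_sum; apply: eq_bigr => c _.
by rewrite rmorphM /= conjCK mulrC.
Qed.

Lemma cdotvv_ge0 x : 0 <= cdot x x.
Proof. by rewrite cdotE sumr_ge0 // => c _; rewrite mulrC mul_conjC_ge0. Qed.

Lemma cdotvv_eq0 x : (cdot x x == 0) = (x == 0).
Proof.
apply/idP/eqP => [|->]; last by rewrite cdotE big1 // => c _; rewrite mxE mulr0.
rewrite cdotE psumr_eq0 => [/allP x0|c _]; last by rewrite mulrC mul_conjC_ge0.
apply/matrixP => c j; rewrite ord1 mxE.
by have := x0 c (mem_index_enum c); rewrite mulrC mul_conjC_eq0 => /eqP.
Qed.

Lemma cdotBr x y z : cdot x (y - z) = cdot x y - cdot x z.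
Proof. by rewrite /cdot mulmxBr !mxE. Qed.

Lemma cdotZr x y a : cdot x (a *: y) = a * cdot x y.
Proof. by rewrite /cdot -scalemxAr mxE. Qed.

Lemma cdot_sumr I (r : seq I) (P : pred I) (F : I -> 'cV[C]_n) x :
  cdot x (\sum_(i <- r | P i) F i) = \sum_(i <- r | P i) cdot x (F i).
Proof. by rewrite /cdot mulmx_sumr summxE. Qed.

Lemma cdotBl x y z : cdot (x - y) z = cdot x z - cdot y z.
Proof. by rewrite cdotC cdotBr rmorphB /= -!cdotC. Qed.

Lemma cdotZl x y a : cdot (a *: x) y = a^* * cdot x y.
Proof. by rewrite cdotC cdotZr rmorphM /= -cdotC. Qed.

Lemma cdot_suml I (r : seq I) (P : pred I) (F : I -> 'cV[C]_n) x :
  cdot (\sum_(i <- r | P i) F i) x = \sum_(i <- r | P i) cdot (F i) x.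
Proof.
by rewrite cdotC cdot_sumr rmorph_sum; apply: eq_bigr => i _; rewrite [RHS]cdotC.
Qed.

Lemma mul_outer_mx x y : x *m adjmx x *m y = cdot x y *: x.
Proof. by rewrite -mulmxA [adjmx x *m y]mx11_scalar mul_mx_scalar. Qed.

Lemma cdot_ReIm x z :
  cdot x z = ((map_mx (@Re C) x)^T *m z) 0 0 - 'i * ((map_mx (@Im C) x)^T *m z) 0 0.
Proof.
rewrite cdotE !mxE mulr_sumr -sumrB; apply: eq_bigr => c _.
rewrite !mxE {1}[x c 0]Crect rmorphD rmorphM /= conjCi.
by rewrite !conj_Creal ?Creal_Re ?Creal_Im // mulNr mulrBl mulrA.
Qed.

End InnerProduct.

Section GramSchmidt.
Variables (C : numClosedFieldType) (n : nat) (s : nat -> 'cV[C]_n).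

Definition gs_vec k := projA (gs s k) *m s k.

Definition gs_proj k :=
  \sum_(j < k) (sqnorm (gs_vec j))^-1 *: (gs_vec j *m adjmx (gs_vec j)).

Lemma gs_mkseq k : gs s k = mkseq gs_vec k.
Proof. by elim: k => [//|k IHk] /=; rewrite mkseqS -IHk. Qed.

Lemma projA_gs k : projA (gs s k) = 1%:M - gs_proj k.
Proof. by rewrite /projA gs_mkseq big_map -val_enum_ord big_map big_enum. Qed.

Lemma gs_vecE k : gs_vec k = s k - gs_proj k *m s k.
Proof. by rewrite /gs_vec projA_gs mulmxBl mul1mx. Qed.

Lemma gs_proj_mul k x :
  gs_proj k *m x = \sum_(j < k) ((sqnorm (gs_vec j))^-1 * cdot (gs_vec j) x) *: gs_vec j.
Proof.
rewrite /gs_proj mulmx_suml; apply: eq_bigr => j _.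
by rewrite -scalemxAl mul_outer_mx scalerA.
Qed.

Definition in_span k (x : 'cV[C]_n) := exists c : nat -> C, x = \sum_(j < k) c j *: s j.

Lemma in_spanD k x y : in_span k x -> in_span k y -> in_span k (x + y).
Proof.
move=> [c ->] [d ->]; exists (fun j => c j + d j).
by rewrite -big_split; apply: eq_bigr => j _; rewrite scalerDl.
Qed.

Lemma in_spanZ k a x : in_span k x -> in_span k (a *: x).
Proof.
move=> [c ->]; exists (fun j => a * c j).
by rewrite scaler_sumr; apply: eq_bigr => j _; rewrite scalerA.
Qed.

Lemma in_spanB k x y : in_span k x -> in_span k y -> in_span k (x - y).
Proof. by move=> xk yk; rewrite -scaleN1r; apply/in_spanD/in_spanZ. Qed.

Lemma in_span_sum k I (r : seq I) (P : pred I) (F : I -> 'cV[C]_n) :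
  (forall i, P i -> in_span k (F i)) -> in_span k (\sum_(i <- r | P i) F i).
Proof.
move=> Fk; apply: big_ind => //; last exact: in_spanD.
by exists (fun=> 0); rewrite big1 // => j _; rewrite scale0r.
Qed.

Lemma in_span_s k j : (j < k)%N -> in_span k (s j).
Proof.
move=> jk; exists (fun t => (t == j)%:R).
rewrite (bigD1 (Ordinal jk)) //= eqxx scale1r big1 ?addr0 // => t tj.
by have /negbTE -> : val t != j by []; rewrite scale0r.
Qed.

Lemma in_span_leq j k x : (j <= k)%N -> in_span j x -> in_span k x.
Proof.
move=> jk [c ->]; exists (fun t => if (t < j)%N then c t else 0).
rewrite (big_ord_widen k (fun t => c t *: s t)) // big_mkcond /=.
by apply: eq_bigr => t _; case: ifP => _; rewrite ?scale0r.
Qed.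

Lemma s_sub_gs_vec_in_span k : in_span k (s k - gs_vec k).
Proof.
elim/ltn_ind: k => k IHk.
rewrite gs_vecE opprB addrC subrK gs_proj_mul; apply: in_span_sum => j _.
apply: in_spanZ; rewrite -[gs_vec j](subKr (s j)).
apply: in_spanB; first exact: in_span_s.
exact: in_span_leq (ltnW (ltn_ord j)) (IHk j (ltn_ord j)).
Qed.

Lemma cdot_in_span_eq0 k x z :
  (forall j, (j < k)%N -> cdot (s j) z = 0) -> in_span k x -> cdot x z = 0.
Proof.
by move=> sz [c ->]; rewrite cdot_suml big1 // => j _; rewrite cdotZl sz ?mulr0.
Qed.

Lemma cdot_gs_vec_eq0 k z :
  (forall j, (j <= k)%N -> cdot (s j) z = 0) -> cdot (gs_vec k) z = 0.
Proof.
move=> sz; rewrite -[gs_vec k](subKr (s k)) cdotBl sz // sub0r.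
by rewrite (cdot_in_span_eq0 _ (s_sub_gs_vec_in_span k)) ?oppr0 // => j /ltnW/sz.
Qed.

Lemma gs_proj_ortho k z :
  (forall j, (j < k)%N -> cdot (s j) z = 0) -> gs_proj k *m z = 0.
Proof.
move=> sz; rewrite gs_proj_mul big1 // => j _.
by rewrite cdot_gs_vec_eq0 ?mulr0 ?scale0r // => t tj; apply/sz/(leq_ltn_trans tj).
Qed.

Lemma adjmx_gs_proj k : adjmx (gs_proj k) = gs_proj k.
Proof.
apply/matrixP => a b; rewrite /gs_proj !mxE !summxE rmorph_sum.
apply: eq_bigr => j _; rewrite !mxE rmorphM /= !big_ord1 !mxE.
have /CrealP -> : (sqnorm (gs_vec j))^-1 \is Num.real.
  by rewrite realV ger0_real // cdotvv_ge0.
by congr (_ * _); rewrite rmorphM /= conjCK mulrC.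
Qed.

Variable K : nat.
Hypothesis s_free : forall k, (k < K)%N -> ~ in_span k (s k).

Lemma gs_vec_neq0 k : (k < K)%N -> gs_vec k != 0.
Proof.
move=> kK; apply/eqP => gs0; apply: (s_free kK).
by rewrite -[s k]subr0 -gs0; apply: s_sub_gs_vec_in_span.
Qed.

Lemma sqnorm_gs_vec_neq0 k : (k < K)%N -> sqnorm (gs_vec k) != 0.
Proof. by move=> kK; rewrite sqnorm_cdot cdotvv_eq0 gs_vec_neq0. Qed.

Lemma gs_vec_ortho_lt k l : (k < K)%N -> (l < k)%N -> cdot (gs_vec l) (gs_vec k) = 0.
Proof.
elim/ltn_ind: k l => k IHk l kK lk.
rewrite [X in cdot _ X]gs_vecE cdotBr gs_proj_mul cdot_sumr (bigD1 (Ordinal lk)) //=.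
rewrite cdotZr -sqnorm_cdot mulrAC mulVf ?mul1r; last first.
  exact/sqnorm_gs_vec_neq0/(ltn_trans lk).
rewrite big1 ?addr0 ?subrr // => j jl; rewrite cdotZr.
have jk := ltn_ord j; have jK := ltn_trans jk kK.
have [lj|jl'|e] := ltngtP l j; last by move: jl; rewrite -(inj_eq val_inj) /= e eqxx.
- by rewrite IHk ?mulr0.
- by rewrite [cdot (gs_vec l) _]cdotC (IHk l) ?rmorph0 ?mulr0 // (ltn_trans lk).
Qed.

Lemma gs_vec_ortho k l : (k < K)%N -> (l < K)%N -> k != l ->
  cdot (gs_vec l) (gs_vec k) = 0.
Proof.
move=> kK lK; case: ltngtP => // [kl|lk] _; last exact: gs_vec_ortho_lt.
by rewrite cdotC gs_vec_ortho_lt ?rmorph0.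
Qed.

Section Projector.
Variable k : nat.
Hypothesis kK : (k <= K)%N.

Lemma gs_proj_gs_vec l : (l < k)%N -> gs_proj k *m gs_vec l = gs_vec l.
Proof.
move=> lk; have lK := leq_trans lk kK.
rewrite gs_proj_mul (bigD1 (Ordinal lk)) //= -sqnorm_cdot mulVf ?sqnorm_gs_vec_neq0 //.
rewrite scale1r big1 ?addr0 // => j jl.
rewrite gs_vec_ortho ?mulr0 ?scale0r // ?(leq_trans (ltn_ord j) kK) //.
by move: jl; rewrite -(inj_eq val_inj) eq_sym.
Qed.

Lemma gs_projK j : (j <= k)%N -> gs_proj k *m gs_proj j = gs_proj j.
Proof.
move=> jk; rewrite /gs_proj mulmx_sumr; apply: eq_bigr => t _.
by rewrite -scalemxAr mulmxA gs_proj_gs_vec // (leq_trans (ltn_ord t)).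
Qed.

Lemma gs_proj_s l : (l < k)%N -> gs_proj k *m s l = s l.
Proof.
move=> lk; rewrite -[s l](subrK (gs_proj l *m s l)) -gs_vecE.
by rewrite mulmxDr gs_proj_gs_vec // mulmxA gs_projK // ltnW.
Qed.

Lemma mxtrace_gs_proj : \tr (gs_proj k) = k%:R.
Proof.
rewrite /gs_proj raddf_sum /= -[k in RHS]card_ord -sumr_const.
apply: eq_bigr => j _; rewrite mxtraceZ mxtrace_mulC /mxtrace big_ord1 -/(sqnorm _).
by rewrite mulVf // sqnorm_gs_vec_neq0 // (leq_trans (ltn_ord j)).
Qed.

End Projector.
End GramSchmidt.

Section RankBounds.
Variables (F : fieldType) (n : nat).

Lemma mxrank_ker_sub m1 m2 (X : 'M[F]_(m1, n)) (Y : 'M[F]_(m2, n)) :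
  (forall z : 'cV_n, X *m z = 0 -> Y *m z = 0) -> (\rank Y <= \rank X)%N.
Proof.
move=> XY; set K := kermx X^T.
have KY : K *m Y^T = 0.
  apply/row_matrixP => j; rewrite row_mul row0; apply: trmx_inj.
  rewrite trmx_mul trmxK trmx0; apply: XY; apply: trmx_inj.
  by rewrite trmx_mul trmxK trmx0 -row_mul (sub_kermxP (submx_refl K)) row0.
have /mxrankS : (K <= kermx Y^T)%MS by apply/sub_kermxP.
rewrite !mxrank_ker !mxrank_tr.
by have := rank_leq_col X; have := rank_leq_col Y; lia.
Qed.

Lemma mxrank_annihilated p m (G : 'M[F]_(p, n)) (Y : 'M[F]_(m, n)) :
  row_free G -> Y *m G^T = 0 -> (\rank Y + p <= n)%N.
Proof.
move=> G_free YG; have /mxrankS : (G <= kermx Y^T)%MS.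
  by apply/sub_kermxP; rewrite -[G]trmxK -trmx_mul YG trmx0.
rewrite mxrank_ker mxrank_tr (eqP G_free).
by have := rank_leq_col Y; lia.
Qed.

Lemma row_free_rowsub m p (f : 'I_p -> 'I_m) (X : 'M[F]_(m, n)) :
  row_free X -> injective f -> row_free (rowsub f X).
Proof.
move=> X_free f_inj; rewrite /row_free rowsubE mxrankMfree //.
set E := rowsub f (1%:M : 'M[F]_m).
have EE : E *m E^T = 1%:M.
  by rewrite -rowsubE; apply/matrixP => a b; rewrite !mxE (inj_eq f_inj) eq_sym.
by apply/eqP/anti_leq; rewrite rank_leq_row /= -{1}(mxrank1 F p) -EE mxrankM_maxl.
Qed.

End RankBounds.

Local Open Scope sesquilinear_scope.

Section RealPart.
Variables (C : numClosedFieldType) (n : nat).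
Implicit Types (A B : 'M[C]_n) (u : 'rV[C]_n).

Lemma adjmxE m p (X : 'M[C]_(m, p)) : adjmx X = X ^t*.
Proof. by apply/matrixP => i j; rewrite !mxE. Qed.

Lemma RemxE A : Remx A = 2^-1 *: (A + map_mx conjC A).
Proof. by apply/matrixP => i j; rewrite !mxE ReE mulrC. Qed.

Lemma Remx1B A : Remx (1%:M - A) = 1%:M - Remx A.
Proof.
apply/matrixP => i j; rewrite !mxE raddfB /=; congr (_ - _).
by case: (i == j); rewrite /= ?mulr1n ?mulr0n ?raddf0 // (Creal_ReP _ (real1 _)).
Qed.

Lemma Remx_herm A : A ^t* = A -> (Remx A) ^t* = Remx A.
Proof.
move=> hA; apply/matrixP => i j; rewrite !mxE conj_Creal ?Creal_Re //.
by rewrite -[A i j](congr1 (fun M : 'M_n => M i j) hA) mxE Re_conj mxE.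
Qed.

Lemma herm_idem_quad_ge0 B u : B ^t* = B -> B *m B = B ->
  0 <= (u *m B *m u ^t*) 0 0.
Proof.
move=> hB hBB; have -> : u *m B *m u ^t* = (u *m B) *m (u *m B) ^t*.
  by rewrite trmx_mul map_mxM hB -[in LHS]hBB !mulmxA.
by rewrite -dotmxE dnorm_ge0.
Qed.

Lemma herm_idem_Remx_quad_ge0 B u : B ^t* = B -> B *m B = B ->
  0 <= (u *m Remx B *m u ^t*) 0 0.
Proof.
move=> hB hBB; rewrite RemxE -scalemxAr -scalemxAl mxE mulmxDr mulmxDl mxE.
apply: mulr_ge0; first by rewrite invr_ge0 ler0n.
apply: addr_ge0; first exact: herm_idem_quad_ge0.
have -> : u *m map_mx conjC B *m u ^t* =
          map_mx conjC (map_mx conjC u *m B *m (map_mx conjC u) ^t*).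
  by rewrite !map_mxM !map_trmx !map_mxCK.
by rewrite mxE conjC_ge0 herm_idem_quad_ge0.
Qed.

Lemma Remx_mulmx A (z : 'cV[C]_n) :
  Remx A *m z = 2^-1 *: (A *m z + map_mx conjC (A *m map_mx conjC z)).
Proof. by rewrite RemxE -scalemxAl mulmxDl map_mxM map_mxCK. Qed.

Lemma Remx_mulmx_eq0 A (z : 'cV[C]_n) :
  A *m z = 0 -> A *m map_mx conjC z = 0 -> Remx A *m z = 0.
Proof. by move=> Az Azc; rewrite Remx_mulmx Az Azc map_mx0 addr0 scaler0. Qed.

Lemma Remx_mulmx_id A (z : 'cV[C]_n) :
  A *m z = z -> A *m map_mx conjC z = map_mx conjC z -> Remx A *m z = z.
Proof.
move=> Az Azc; rewrite Remx_mulmx Az Azc map_mxCK -[X in _ *: (X + X)]scale1r.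
by rewrite -scalerDl scalerA mulVf ?scale1r // pnatr_eq0.
Qed.

End RealPart.

Section Spectrum.
Variables (C : numClosedFieldType) (n : nat).
Implicit Types (R : 'M[C]_n) (d : 'rV[C]_n).

Lemma char_poly_conj (P D : 'M[C]_n) : P \in unitmx ->
  char_poly (invmx P *m D *m P) = char_poly D.
Proof.
move=> Pu; rewrite /char_poly /char_poly_mx.
set iP := map_mx polyC (invmx P); set mP := map_mx polyC P.
have iPP : iP *m mP = 1%:M by rewrite -map_mxM mulVmx // map_mx1.
have -> : 'X%:M - map_mx polyC (invmx P *m D *m P) = iP *m ('X%:M - map_mx polyC D) *m mP.
  rewrite !map_mxM mulmxBr mulmxBl; congr (_ - _).
  by rewrite scalar_mxC -mulmxA iPP mulmx1.
by rewrite !det_mulmx mulrAC -det_mulmx iPP det1 mul1r.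
Qed.

Lemma mxrank_mul_unit (X M Y : 'M[C]_n) : X \in unitmx -> Y \in unitmx ->
  \rank (X *m M *m Y) = \rank M.
Proof.
move=> Xu Yu; rewrite mxrankMfree ?row_free_unit //.
by rewrite -mxrank_tr trmx_mul mxrankMfree ?mxrank_tr // row_free_unit unitmx_tr.
Qed.

Lemma rank_diag_mx d : \rank (diag_mx d) = (\sum_j (d ord0 j != 0%R))%N.
Proof.
elim: n d => [|m IHm] d; first by rewrite big_ord0 thinmx0 mxrank0.
have -> : \rank (diag_mx d) = \rank (block_mx (diag_mx (lsubmx (d : 'rV_(1 + m)))) 0 0
                                          (diag_mx (rsubmx (d : 'rV_(1 + m))))).
  by rewrite -diag_mx_row hsubmxK.
rewrite rank_diag_block_mx IHm big_ord_recl; congr (_ + _)%N; last first.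
  by apply: eq_bigr => j _; rewrite mxE; congr (d _ _ != _); apply: val_inj.
rewrite (mx11_scalar (diag_mx _)) rank_rV !mxE eqxx mulr1n.
have -> : lshift m (0 : 'I_1) = ord0 by apply: val_inj.
congr (~~ _); apply/eqP/eqP => [/matrixP/(_ 0 0)|->]; last by rewrite raddf0.
by rewrite !mxE eqxx mulr1n.
Qed.

(* Only meaningful for a normal R: otherwise spectral_diag R is 0. *)
Definition spectrum R := [seq spectral_diag R 0 j | j <- enum 'I_n].

Lemma count_spectrum (a : pred C) R :
  count a (spectrum R) = (\sum_j a (spectral_diag R ord0 j))%N.
Proof. by rewrite count_map -sum1_count big_enum_cond big_mkcond. Qed.

Section Normal.
Variable R : 'M[C]_n.
Hypothesis R_normal : R \is normalmx.
Let P := spectralmx R.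
Let d := spectral_diag R.

Lemma diag_spectral : diag_mx d = P *m R *m invmx P.
Proof.
rewrite [in RHS](orthomx_spectralP R_normal) !mulmxA mulmxV ?spectral_unit // mul1mx.
by rewrite mulmxK ?spectral_unit.
Qed.

Lemma char_poly_spectrum : char_poly R = \prod_(x <- spectrum R) ('X - x%:P).
Proof.
rewrite {1}[R](orthomx_spectralP R_normal) char_poly_conj ?spectral_unit //.
rewrite char_poly_trig ?diag_mx_is_trig // big_map big_enum /=.
by apply: eq_bigr => j _; rewrite mxE eqxx mulr1n.
Qed.

Lemma mxtrace_spectrum : \tr R = \sum_(x <- spectrum R) x.
Proof.
rewrite big_map big_enum /= -mxtrace_diag diag_spectral mxtrace_mulC mulmxA.
by rewrite mulVmx ?spectral_unit // mul1mx.
Qed.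

Lemma mxrank_spectrum : \rank R = count (fun x => x != 0) (spectrum R).
Proof.
rewrite count_spectrum -rank_diag_mx diag_spectral.
by rewrite mxrank_mul_unit ?unitmx_inv ?spectral_unit.
Qed.

Lemma mxrank1B_spectrum : \rank (1%:M - R) = count (fun x => x != 1) (spectrum R).
Proof.
have -> : 1%:M - R = invmx P *m diag_mx (const_mx 1 - d) *m P.
  rewrite [in LHS](orthomx_spectralP R_normal) raddfB /= diag_const_mx mulmxBr mulmxBl.
  by rewrite mulmx1 mulVmx ?spectral_unit.
rewrite mxrank_mul_unit ?unitmx_inv ?spectral_unit // rank_diag_mx count_spectrum.
by apply: eq_bigr => j _; rewrite !mxE subr_eq0 eq_sym.
Qed.

Lemma spectral_diag_quad j : d 0 j = (row j P *m R *m (row j P) ^t*) 0 0.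
Proof.
have -> : d 0 j = diag_mx d j j by rewrite mxE eqxx mulr1n.
rewrite diag_spectral invmx_unitary ?spectral_unitarymx // -row_mul mxE.
by rewrite !mxE; apply: eq_bigr => k _; rewrite !mxE.
Qed.

End Normal.

Lemma spectrum_Remx_proj A : A ^t* = A -> A *m A = A ->
  all (fun x => 0 <= x <= 1) (spectrum (Remx A)).
Proof.
move=> hA hAA; have hR := Remx_herm hA.
have R_normal : Remx A \is normalmx by apply/normalmxP; rewrite hR.
have hB : (1%:M - A) ^t* = 1%:M - A.
  by rewrite linearB /= map_mxB trmx1 map_mx1 hA.
have hBB : (1%:M - A) *m (1%:M - A) = 1%:M - A.
  by rewrite mulmxBl mul1mx mulmxBr mulmx1 hAA subrr subr0.
apply/allP => _ /mapP [j _ ->]; set u := row j (spectralmx (Remx A)).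
have uu : (u *m u ^t*) 0 0 = 1.
  by rewrite -dotmxE; have /row_unitarymxP -> := spectral_unitarymx (Remx A); rewrite eqxx.
rewrite (spectral_diag_quad R_normal) herm_idem_Remx_quad_ge0 //=.
have := herm_idem_Remx_quad_ge0 u hB hBB.
by rewrite Remx1B mulmxBr mulmxBl mulmx1 mxE uu mxE subr_ge0.
Qed.

End Spectrum.

Lemma filter_pred1_nseq (T : eqType) (u : T) (s : seq T) :
  [seq x <- s | x == u] = nseq (count_mem u s) u.
Proof. by elim: s => //= x s ->; case: eqP => [->|]. Qed.

Lemma perm_nseq2_filter (T : eqType) (u v : T) (s : seq T) : u != v ->
  perm_eq s (nseq (count_mem u s) u ++ nseq (count_mem v s) v ++
             [seq x <- s | (x != u) && (x != v)]).
Proof.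
move=> uv; rewrite perm_sym -!filter_pred1_nseq.
apply: perm_trans (permEl (perm_filterC (pred1 u) s)); rewrite perm_cat2l.
apply: perm_trans (permEl (perm_filterC (pred1 v) _)); rewrite -!filter_predI.
have -> : [seq x <- s | predI (pred1 v) (predC (pred1 u)) x] = [seq x <- s | x == v].
  by apply: eq_filter => x /=; case: eqP => // ->; rewrite eq_sym uv.
have -> : [seq x <- s | predI (predC (pred1 v)) (predC (pred1 u)) x] =
          [seq x <- s | (x != u) && (x != v)].
  by apply: eq_filter => x /=; rewrite andbC.
exact: perm_refl.
Qed.

Section UnitInterval.
Variable R : numDomainType.

Lemma natr_add_gt0_ltn (p q : nat) (t : R) : p%:R + t = q%:R -> 0 < t -> (p < q)%N.
Proof. by move=> pq t0; rewrite -(ltr_nat R) -pq ltr_pwDr. Qed.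

Lemma natr_add_lt1_leq (p q : nat) (t : R) : p%:R + t = q%:R -> t < 1 -> (q <= p)%N.
Proof.
move=> pq t1; rewrite leqNgt -(ler_nat R) -natr1 -pq.
by rewrite lerD2l; apply/negP => /(lt_le_trans t1); rewrite ltxx.
Qed.

Lemma unit_interval_shape (a b N i : nat) (rest : seq R) : (2 <= i <= N)%N ->
  {in rest, forall x, 0 < x < 1} -> N = (a + (b + size rest))%N ->
  (a + size rest <= (N - i).+2)%N -> (b + size rest <= i)%N ->
  a%:R + \sum_(x <- rest) x = (N - i).+1%:R ->
  exists2 eta, 0 <= eta <= 1 &
    perm_eq (nseq a 1 ++ nseq b 0 ++ rest)
            (nseq (N - i) 1 ++ nseq (i - 2) 0 ++ [:: eta; 1 - eta]).
Proof.
move=> /andP [i2 iN] rest01 N_eq ca cb.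
have : (size rest <= 2)%N by lia.
case: rest rest01 N_eq ca cb => [|x [|y [|//]]] /= rest01 N_eq ca cb _ sum_rest.
- exists 1; first by rewrite lexx ler01.
  move: sum_rest; rewrite big_nil addr0 => /eqP; rewrite eqr_nat => /eqP a_eq.
  have b_eq : b = (i - 2).+1 by lia.
  rewrite subrr; apply/permP => p; rewrite !count_cat !count_nseq /= a_eq b_eq !mulnS.
  ring.
- have /andP [x0 x1] := rest01 x (mem_head _ _).
  move: sum_rest; rewrite big_seq1 => sum_rest.
  have := natr_add_gt0_ltn sum_rest x0; have := natr_add_lt1_leq sum_rest x1; lia.
- have /andP [x0 x1] := rest01 x (mem_head _ _).
  have /andP [y0 _] : 0 < y < 1 by apply: rest01; rewrite !inE eqxx orbT.
  move: sum_rest; rewrite big_cons big_seq1 => sum_rest.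
  have a_eq : a = (N - i)%N.
    by have := natr_add_gt0_ltn sum_rest (addr_gt0 x0 y0); lia.
  have b_eq : b = (i - 2)%N by lia.
  exists x; first by rewrite !ltW.
  move: sum_rest; rewrite a_eq -natr1 => /addrI xy1.
  have -> : 1 - x = y by rewrite -xy1 addrAC subrr add0r.
  by rewrite b_eq.
Qed.

Lemma unit_interval_multiset (ds : seq R) i : (2 <= i <= size ds)%N ->
  all (fun x => 0 <= x <= 1) ds ->
  \sum_(x <- ds) x = (size ds - i).+1%:R ->
  (count (fun x => x != 0%R) ds <= (size ds - i).+2)%N ->
  (count (fun x => x != 1%R) ds <= i)%N ->
  exists2 eta, 0 <= eta <= 1 &
    perm_eq ds (nseq (size ds - i) 1 ++ nseq (i - 2) 0 ++ [:: eta; 1 - eta]).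
Proof.
move=> iN ds01 sum_ds c0 c1.
set a := count_mem 1 ds; set b := count_mem 0 ds.
set rest := [seq x <- ds | (x != 1) && (x != 0)].
have ds_perm := perm_nseq2_filter ds (oner_neq0 R); rewrite -/a -/b -/rest in ds_perm.
have rest01 x : x \in rest -> 0 < x < 1.
  rewrite mem_filter => /andP [/andP [x1 x0] /(allP ds01) /andP [x_ge0 x_le1]].
  by rewrite !lt_def x_ge0 x_le1 x0 eq_sym x1.
have count_ds (p : pred R) : {in rest, forall x, p x} ->
    count p ds = (p 1%R * a + (p 0%R * b + size rest))%N.
  move=> restp; rewrite {1}(permP ds_perm) !count_cat !count_nseq.
  by congr (_ + (_ + _))%N; apply/eqP; rewrite -all_count; apply/allP.
have size_ds : size ds = (a + (b + size rest))%N.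
  by rewrite (perm_size ds_perm) !size_cat !size_nseq.
have c0' : (a + size rest <= (size ds - i).+2)%N.
  move: c0; rewrite count_ds => [|x /rest01 /andP [x0 _]]; last by rewrite gt_eqF.
  by rewrite oner_eq0 eqxx mul1n mul0n.
have c1' : (b + size rest <= i)%N.
  move: c1; rewrite count_ds => [|x /rest01 /andP [_ x1]]; last by rewrite lt_eqF.
  by rewrite eqxx eq_sym oner_eq0 mul0n mul1n.
have sum_rest : a%:R + \sum_(x <- rest) x = (size ds - i).+1%:R.
  rewrite -sum_ds (perm_big _ ds_perm) !big_cat !big_nseq !iter_addr_0 /=.
  by rewrite mul0rn add0r.
have [eta eta01 shape] := unit_interval_shape iN rest01 size_ds c0' c1' sum_rest.
by exists eta => //; apply: perm_trans shape.
Qed.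

End UnitInterval.

Lemma char_poly_Remx_proj (C : numClosedFieldType) n (A : 'M[C]_n) i :
  A ^t* = A -> A *m A = A -> (2 <= i <= n)%N ->
  \tr (Remx A) = (n - i).+1%:R -> (\rank (Remx A) <= (n - i).+2)%N ->
  (\rank (1%:M - Remx A)%R <= i)%N ->
  exists2 eta : C, 0 <= eta <= 1 & char_poly (Remx A) =
    \prod_(x <- nseq (n - i) 1 ++ nseq (i - 2) 0 ++ [:: eta; 1 - eta]) ('X - x%:P).
Proof.
move=> hA hAA iN tr_R rk_R rk_1R.
have R_normal : Remx A \is normalmx by apply/normalmxP; rewrite Remx_herm.
have size_sp : size (spectrum (Remx A)) = n by rewrite size_map size_enum_ord.
have := unit_interval_multiset (ds := spectrum (Remx A)) (i := i); rewrite size_sp.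
case/(_ iN (spectrum_Remx_proj hA hAA)) => [|||eta eta01 sp_perm].
- by rewrite -mxtrace_spectrum.
- by rewrite -mxrank_spectrum.
- by rewrite -mxrank1B_spectrum.
by exists eta => //; rewrite char_poly_spectrum // (perm_big _ sp_perm).
Qed.


(* [s 0] plays the role of the paper's s_1, the only possibly non-real row, and A is A_(k+1). *)
Section GramSchmidtRealPart.
Variables (C : numClosedFieldType) (n : nat) (s : nat -> 'cV[C]_n) (k : nat).
Hypothesis k_lt_n : (k < n)%N.
Hypothesis s_free : forall j, (j < k)%N -> ~ in_span s j (s j).
Hypothesis s_real : forall j, (0 < j)%N -> s j \is a realmx.
Hypothesis s_tail_free : row_free (\matrix_(j < k.-1) (s j.+1)^T).

Let A := projA (gs s k).

Lemma projA_gs_herm : A ^t* = A.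
Proof.
by rewrite /A projA_gs linearB /= map_mxB trmx1 map_mx1 -adjmxE adjmx_gs_proj.
Qed.

Lemma projA_gs_idem : A *m A = A.
Proof.
rewrite /A projA_gs mulmxBl mul1mx mulmxBr mulmx1.
rewrite (gs_projK s_free (leqnn k) (leqnn k)).
by rewrite subrr subr0.
Qed.

Lemma mxtrace_Remx_projA : \tr (Remx A) = (n - k)%:R.
Proof.
have -> : \tr (Remx A) = 'Re (\tr A).
  by rewrite /mxtrace raddf_sum; apply: eq_bigr => j _; rewrite mxE.
rewrite /A projA_gs raddfB /= mxtrace1 (mxtrace_gs_proj s_free (leqnn k)).
rewrite -natrB; last exact: ltnW.
by apply/Creal_ReP; rewrite realn.
Qed.

Lemma projA_gs_s j : (j < k)%N -> A *m s j = 0.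
Proof. by move=> jk; rewrite /A projA_gs mulmxBl mul1mx (gs_proj_s s_free) ?subrr. Qed.

Lemma mxrank_Remx_projA : (\rank (Remx A) <= (n - k).+1)%N.
Proof.
have := mxrank_annihilated s_tail_free (Y := Remx A).
suff -> : Remx A *m (\matrix_(j < k.-1) (s j.+1)^T)^T = 0 by move/(_ erefl); lia.
apply: trmx_inj; apply/row_matrixP => j; rewrite trmx_mul trmxK trmx0 row0 row_mul rowK.
have jk : (j.+1 < k)%N by have := ltn_ord j; lia.
rewrite -[RHS]trmx0 -trmx_mul; congr _^T; apply: Remx_mulmx_eq0.
  exact: projA_gs_s.
by rewrite realmxC ?s_real // projA_gs_s.
Qed.

Lemma mxrank1B_Remx_projA : (\rank (1%:M - Remx A)%R <= k.+1)%N.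
Proof.
(* Since only [s 0] may be non-real, [z] is orthogonal to every [s j], j < k, as soon as
   it is killed by the k + 1 real rows of F. *)
pose F := col_mx (\matrix_(j < k) (map_mx (@Re C) (s j))^T) (map_mx (@Im C) (s 0))^T.
have F_real : map_mx conjC F = F.
  apply/matrixP => a b; rewrite !mxE.
  by case: splitP => ? _; rewrite !mxE conj_Creal ?Creal_Re ?Creal_Im.
have F_ortho (z : 'cV_n) : F *m z = 0 -> forall j, (j < k)%N -> cdot (s j) z = 0.
  move=> /eqP; rewrite mul_col_mx col_mx_eq0 => /andP [/eqP Re0 /eqP Im0] j jk.
  have := congr1 (row (Ordinal jk)) Re0; rewrite row_mul rowK row0 => Rej.
  rewrite cdot_ReIm Rej mxE sub0r.
  case: j jk Rej => [|j] jk _; first by rewrite Im0 mxE mulr0 oppr0.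
  have -> : map_mx (@Im C) (s j.+1) = 0.
    by apply/matrixP => a b; rewrite !mxE; apply/Creal_ImP/(mxOverP (s_real _)).
  by rewrite trmx0 mul0mx mxE mulr0 oppr0.
have A_fix (z : 'cV_n) : F *m z = 0 -> A *m z = z.
  move=> Fz; rewrite /A projA_gs mulmxBl mul1mx gs_proj_ortho ?subr0 //.
  by move=> j /(F_ortho _ Fz).
apply: (@leq_trans (\rank F)); last by have := rank_leq_row F; lia.
apply: mxrank_ker_sub => z Fz.
rewrite mulmxBl mul1mx Remx_mulmx_id ?subrr ?A_fix //.
by rewrite -F_real -map_mxM Fz map_mx0.
Qed.

End GramSchmidtRealPart.

Section Rows.
Variables (C : numClosedFieldType) (MR MT : nat) (S : 'M[C]_(MR, MT)).

Lemma srow_ord (j : 'I_MR) : srow S j = (row j S)^T.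
Proof.
rewrite /srow; case: ltnP => [jM|]; last by rewrite leqNgt ltn_ord.
by congr (row _ S)^T; apply: val_inj.
Qed.

Lemma srow_free k : row_free S -> (k < MR)%N -> ~ in_span (srow S) k (srow S k).
Proof.
move=> S_free kM [c sk].
pose u := \row_(j < MR) (if (j < k)%N then c j else 0).
suff : (u - delta_mx 0 (Ordinal kM)) *m S = 0.
  move/eqP; rewrite mulmx_free_eq0 // => /eqP /matrixP /(_ 0 (Ordinal kM)).
  by rewrite !mxE ltnn !eqxx /= sub0r => /eqP; rewrite oppr_eq0 oner_eq0.
apply: trmx_inj; rewrite mulmxBl -rowE linearB /= -srow_ord sk trmx0.
rewrite mulmx_sum_row linear_sum /= (big_ord_widen MR (fun j => c j *: srow S j) (ltnW kM)).
rewrite [X in _ - X]big_mkcond /=; apply/eqP; rewrite subr_eq0; apply/eqP.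
apply: eq_bigr => j _.
by rewrite linearZ /= mxE srow_ord; case: ifP => _; rewrite ?scale0r.
Qed.

Lemma row_free_srow_tail m : row_free S -> (m < MR)%N ->
  row_free (\matrix_(j < m) (srow S j.+1)^T).
Proof.
move=> S_free mM; have jM (j : 'I_m) : (j.+1 < MR)%N by apply: leq_ltn_trans mM.
have -> : \matrix_(j < m) (srow S j.+1)^T = rowsub (fun j => Ordinal (jM j)) S.
  by apply/matrixP => a b; rewrite !mxE (srow_ord (Ordinal (jM a))) !mxE.
by apply: row_free_rowsub S_free _ => a b [] /val_inj.
Qed.

End Rows.

Lemma srow_S_real (C : numClosedFieldType) MR MT (Phi : 'M[C]_(MR, MT)) :
  (forall i j, Phi i j \is Num.real) ->
  forall j, (0 < j)%N -> srow (S_mx Phi) j \is a realmx.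
Proof.
move=> Phi_real j j_gt0; apply/mxOverP => a b.
rewrite /srow; case: ltnP => [jM|_]; last by rewrite mxE.
by rewrite !mxE /= (negbTE (lt0n_neq0 j_gt0)) /= mulr0 oppr0 add0r Phi_real.
Qed.

Theorem lemma5 (C : numClosedFieldType) (MR MT : nat)
  (hR : (2 <= MR)%N) (hRT : (MR <= MT)%N)
  (Phi : 'M[C]_(MR, MT)) (hPhi : forall i j, Phi i j \is Num.real)
  (hgen : row_free (S_mx Phi)) :
  forall i : nat, (2 <= i <= MR)%N ->
    exists eta : C, 0 <= eta <= 1 /\
      char_poly (Remx (A_mx (S_mx Phi) i)) =
      \prod_(x <- nseq (MT - i) 1 ++ nseq (i - 2) 0 ++ [:: eta; 1 - eta])
         ('X - x%:P).
Proof.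
move=> i /andP [i2 iMR]; set S := S_mx Phi; set k := i.-1.
have ik : i = k.+1 by rewrite prednK // ltnW.
have s_free j : (j < k)%N -> ~ in_span (srow S) j (srow S j).
  by move=> jk; apply: srow_free hgen _; lia.
have s_real := srow_S_real hPhi.
have tail_free : row_free (\matrix_(j < k.-1) (srow S j.+1)^T).
  by apply: row_free_srow_tail hgen _; lia.
have k_lt : (k < MT)%N by lia.
have iMT : (2 <= i <= MT)%N by rewrite i2 (leq_trans iMR hRT).
have tr_R : \tr (Remx (A_mx S i)) = (MT - i).+1%:R.
  by rewrite mxtrace_Remx_projA // ik subnSK.
have rk_R : (\rank (Remx (A_mx S i)) <= (MT - i).+2)%N.
  by rewrite ik subnSK //; apply: mxrank_Remx_projA.
have rk_1R : (\rank (1%:M - Remx (A_mx S i))%R <= i)%N.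
  by rewrite {2}ik; apply: mxrank1B_Remx_projA.
have [eta eta01 cp] :=
  char_poly_Remx_proj (projA_gs_herm _ _) (projA_gs_idem s_free) iMT tr_R rk_R rk_1R.
by exists eta.
Qed.
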